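(* Let $\mathcal{S}=\{1,\dots,S\}$, $T>0$, let $R_t$ be the rate matrix of a forward CTMC with $X_0\sim p_{\text{data}}$, conditionals $q_{t|0}$, marginals $q_t$ and posterior $p(x_0\mid x_t)$, and let $\hat R_t(i,j)=R_t(j,i)q_t(j)/q_t(i)$ be the true reverse rates, $\hat R_t(i,j\mid x_0)=R_t(j,i)\frac{q_{t|0}(j\mid x_0)}{q_{t|0}(i\mid x_0)}$ the conditional reverse rates, and $f(r,c)=r\log\frac rc-r+c$. Let $R^\theta_t(i,j)$ be model reverse rates, and define \[ \mathcal{L}_{\mathrm{KL}}(\theta):=\int_0^T\mathbb{E}_{x_0\sim p_{\text{data}},\,x_t\sim q_{t|0}(\cdot\mid x_0)}\Bigl[\sum_{j\ne x_t}f\bigl(\hat R_t(x_t,j\mid x_0),R^\theta_t(x_t,j)\bigr)\Bigr]\mathrm{d}t, \] \[ \mathrm{KL}(\hat{\mathbb{Q}}\|\mathbb{P}^\theta):=\int_0^T\sum_iq_t(i)\sum_{j\ne i}f\bigl(\hat R_t(i,j),R^\theta_t(i,j)\bigr)\mathrm{d}t. \] Assume: (i) the forward quantities $q_t$, $q_{t|0}$, $p(x_0\mid x_t)$ do not depend on $\theta$; (ii) $R^\theta_t(i,j)>0$ and is differentiable in $\theta$ for all $i\ne j$; (iii) differentiation in $\theta$ can be exchanged with expectation/integration. Then there is a $\theta$-independent constant $C_{\mathrm{gap}}\ge0$ with $\mathcal{L}_{\mathrm{KL}}(\theta)=\mathrm{KL}(\hat{\mathbb{Q}}\|\mathbb{P}^\theta)+C_{\mathrm{gap}}$;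 hence $\nabla_\theta\mathcal{L}_{\mathrm{KL}}(\theta)=\nabla_\theta\mathrm{KL}(\hat{\mathbb{Q}}\|\mathbb{P}^\theta)$, $\arg\min_\theta\mathcal{L}_{\mathrm{KL}}(\theta)=\arg\min_\theta\mathrm{KL}(\hat{\mathbb{Q}}\|\mathbb{P}^\theta)$, and every stationary point of one objective is a stationary point of the other.
   Context: A rate matrix $R_t$ satisfies $R_t(i,j)\ge0$ ($i\ne j$), $\sum_jR_t(i,j)=0$. $q_{t|0}(i\mid x_0)=\mathbb{P}(X_t=i\mid X_0=x_0)$, $q_t(i)=\sum_{x_0}p_{\text{data}}(x_0)q_{t|0}(i\mid x_0)$, $p(x_0\mid x_t)=p_{\text{data}}(x_0)q_{t|0}(x_t\mid x_0)/q_t(x_t)$. $\hat{\mathbb{Q}}$ and $\mathbb{P}^\theta$ denote the path measures of the true reverse process and of the generative process with rates $R^\theta_t$. All ratios and logarithms are assumed well defined (convention $0\log0=0$). *)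

From HB Require Import structures.
From mathcomp Require Import all_boot all_order all_algebra.
From mathcomp Require Import all_classical all_reals all_analysis.
Set Implicit Arguments. Unset Strict Implicit. Unset Printing Implicit Defensive.
Import Order.TTheory GRing.Theory Num.Theory.
Import numFieldNormedType.Exports.
Local Open Scope classical_set_scope.
Local Open Scope ring_scope.

Section Defs.
Variables (R : realType) (S : nat).

(* f(r,c) = r log (r/c) - r + c ; ln 0 = 0 in mathcomp gives 0 log 0 = 0 *)
Definition fdiv (r c : R) : R := r * ln (r / c) - r + c.

(* marginal q_t(i) = sum_x0 p_data(x0) q_{t|0}(i|x0);  q t x0 i = q_{t|0}(i|x0) *)
Definition marg (pdata : 'I_S -> R) (q : R -> 'I_S -> 'I_S -> R) (t : R) (i : 'I_S) : R :=
  \sum_(x0 : 'I_S) pdata x0 * q t x0 i.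

Definition rev_rate (Rt : R -> 'I_S -> 'I_S -> R) (pdata : 'I_S -> R)
  (q : R -> 'I_S -> 'I_S -> R) (t : R) (i j : 'I_S) : R :=
  Rt t j i * marg pdata q t j / marg pdata q t i.

Definition cond_rev_rate (Rt : R -> 'I_S -> 'I_S -> R)
  (q : R -> 'I_S -> 'I_S -> R) (t : R) (x0 i j : 'I_S) : R :=
  Rt t j i * q t x0 j / q t x0 i.

Definition LKL_integrand d (Rt : R -> 'I_S -> 'I_S -> R) (pdata : 'I_S -> R)
  (q : R -> 'I_S -> 'I_S -> R) (Rth : 'rV[R]_d -> R -> 'I_S -> 'I_S -> R)
  (th : 'rV[R]_d) (t : R) : R :=
  \sum_(x0 : 'I_S) \sum_(xt : 'I_S) pdata x0 * q t x0 xt *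
     \sum_(j : 'I_S | j != xt) fdiv (cond_rev_rate Rt q t x0 xt j) (Rth th t xt j).

Definition KL_integrand d (Rt : R -> 'I_S -> 'I_S -> R) (pdata : 'I_S -> R)
  (q : R -> 'I_S -> 'I_S -> R) (Rth : 'rV[R]_d -> R -> 'I_S -> 'I_S -> R)
  (th : 'rV[R]_d) (t : R) : R :=
  \sum_(i : 'I_S) marg pdata q t i *
     \sum_(j : 'I_S | j != i) fdiv (rev_rate Rt pdata q t i j) (Rth th t i j).

Definition LKL d (T : R) Rt pdata q (Rth : 'rV[R]_d -> R -> 'I_S -> 'I_S -> R) th : R :=
  Rintegral lebesgue_measure `[0, T] (LKL_integrand Rt pdata q Rth th).

Definition KLpath d (T : R) Rt pdata q (Rth : 'rV[R]_d -> R -> 'I_S -> 'I_S -> R) th : R :=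
  Rintegral lebesgue_measure `[0, T] (KL_integrand Rt pdata q Rth th).

Definition rate_matrix (M : 'I_S -> 'I_S -> R) : Prop :=
  (forall i j, i != j -> 0 <= M i j) /\ (forall i, \sum_(j : 'I_S) M i j = 0).

End Defs.

Definition stationary (R : realType) d (F : 'rV[R]_d -> R) (th : 'rV[R]_d) : Prop :=
  differentiable F th /\ forall v : 'rV[R]_d, 'D_v F th = 0.

From HB Require Import structures.
From mathcomp Require Import all_boot all_order all_algebra.
From mathcomp Require Import all_classical all_reals all_analysis.
From mathcomp Require Import lra ring.

(* Fix t, x_t and j.  Weighted by p_data(x_0) q_{t|0}(x_t|x_0), i.e. by the
   posterior of x_0 given x_t, the conditional reverse rates R^_t(x_t,j|x_0)
   average to the true reverse rate R^_t(x_t,j).  Since f(., c) is the Bregman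
   divergence of r log r, a weighted mean m of rates r_k satisfies the
   Pythagorean identity  sum w_k f(r_k, c) = (sum w_k) f(m, c) + sum w_k f(r_k, m).
   Summed over x_t and j this writes the L_KL integrand as the KL integrand plus
   a nonnegative gap that does not involve theta.  Integrating over ]0, T]
   (q_t > 0 is only assumed for t > 0; {0} is null) gives L_KL = KL + C_gap, and
   a constant shift changes neither derivatives, minimisers nor stationary
   points. *)

Set Implicit Arguments.
Unset Strict Implicit.
Unset Printing Implicit Defensive.

Import Order.TTheory GRing.Theory Num.Theory.
Import numFieldNormedType.Exports.
Local Open Scope classical_set_scope.
Local Open Scope ring_scope.

Section FDiv.
Variable R : realType.
Implicit Types x r c : R.

Lemma fdiv0l c : fdiv 0 c = c.
Proof. by rewrite /fdiv !mul0r subr0 add0r. Qed.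

Lemma fdivxx x : fdiv x x = 0.
Proof.
have [->|x_neq0] := eqVneq x 0; first by rewrite fdiv0l.
by rewrite /fdiv divff // ln1 mulr0 sub0r addNr.
Qed.

Lemma fdiv_ge0 x r : 0 <= x -> 0 < r -> 0 <= fdiv x r.
Proof.
rewrite le_eqVlt => /predU1P[<- r_gt0|x_gt0 r_gt0]; first by rewrite fdiv0l ltW.
have ln_rx : ln (r / x) <= r / x - 1.
  by rewrite -[X in ln X](subrKC 1) le_ln1Dx // ltrBrDl subrr divr_gt0.
have : x * ln (r / x) <= r - x.
  have -> : r - x = x * (r / x - 1) by field; rewrite gt_eqF.
  by rewrite ler_pM2l.
rewrite /fdiv -[x / r]invf_div lnV ?posrE ?divr_gt0 //; lra.
Qed.

Lemma fdiv_rebase x r c : 0 <= x -> 0 < r -> 0 < c ->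
  fdiv x c = fdiv x r + x * (ln r - ln c) + (c - r).
Proof.
rewrite le_eqVlt => /predU1P[<- |x_gt0] r_gt0 c_gt0; first by rewrite !fdiv0l mul0r; lra.
by rewrite /fdiv !ln_div ?posrE //; lra.
Qed.

Lemma mulr_fdiv_eq0 a x c : a * x = 0 -> a * fdiv x c = a * c.
Proof. by move/eqP; rewrite mulf_eq0 => /orP[]/eqP->; rewrite ?mul0r ?fdiv0l. Qed.

End FDiv.

Definition wmean {R : realType} {I : finType} (w r : I -> R) : R :=
  (\sum_i w i * r i) / \sum_i w i.

Section WeightedMean.
Variables (R : realType) (I : finType) (w r : I -> R).
Hypotheses (w_ge0 : forall i, 0 <= w i) (r_ge0 : forall i, 0 <= r i).
Hypothesis sumw_gt0 : 0 < \sum_i w i.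

Lemma wmean_ge0 : 0 <= wmean w r.
Proof.
by apply: divr_ge0; [apply: sumr_ge0 => i _; rewrite mulr_ge0|apply: ltW].
Qed.

Lemma wmean_eq0 : wmean w r = 0 -> forall i, w i * r i = 0.
Proof.
move/eqP; rewrite mulf_eq0 invr_eq0 (gt_eqF sumw_gt0) orbF => /eqP sum0 i.
by apply/eqP; rewrite (psumr_eq0P _ sum0) // => k _; rewrite mulr_ge0.
Qed.

Lemma sum_fdiv_wmean_ge0 : 0 <= \sum_i w i * fdiv (r i) (wmean w r).
Proof.
apply: sumr_ge0 => i _; have := wmean_ge0; rewrite le_eqVlt => /predU1P[m0|m_gt0].
  by rewrite -m0 mulr_fdiv_eq0 ?mulr0 // wmean_eq0.
by rewrite mulr_ge0 // fdiv_ge0.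
Qed.

Lemma sum_fdiv_wmean (c : R) : 0 < c ->
  \sum_i w i * fdiv (r i) c =
  (\sum_i w i) * fdiv (wmean w r) c + \sum_i w i * fdiv (r i) (wmean w r).
Proof.
move=> c_gt0; have := wmean_ge0; rewrite le_eqVlt => /predU1P[m0|m_gt0].
  rewrite -m0 fdiv0l mulr_suml -big_split; apply: eq_bigr => i _ /=.
  by rewrite !mulr_fdiv_eq0 ?wmean_eq0 // mulr0 addr0.
set m := wmean w r in m_gt0 *.
have sum_wr : \sum_i w i * r i = (\sum_i w i) * m.
  by rewrite /m /wmean mulrC mulfVK ?gt_eqF.
transitivity (\sum_i (w i * fdiv (r i) m + w i * r i * (ln m - ln c) + w i * (c - m))).
  by apply: eq_bigr => i _; rewrite (fdiv_rebase (r_ge0 i) m_gt0 c_gt0); ring.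
rewrite !big_split /= -!mulr_suml sum_wr (fdiv_rebase (ltW m_gt0) m_gt0 c_gt0) fdivxx.
ring.
Qed.

End WeightedMean.

Section ReverseRates.
Variables (R : realType) (S : nat) (Rt : R -> 'I_S -> 'I_S -> R) (pdata : 'I_S -> R).
Variables (q : R -> 'I_S -> 'I_S -> R) (t : R).

Definition gap_integrand : R :=
  \sum_(xt : 'I_S) \sum_(j : 'I_S | j != xt) \sum_(x0 : 'I_S)
    pdata x0 * q t x0 xt * fdiv (cond_rev_rate Rt q t x0 xt j) (rev_rate Rt pdata q t xt j).

Hypotheses (pdata_ge0 : forall x0, 0 <= pdata x0) (pdata_sum1 : \sum_x0 pdata x0 = 1).
Hypothesis Rt_ge0 : forall i j, i != j -> 0 <= Rt t i j.
Hypothesis q_gt0 : forall x0 i, 0 < q t x0 i.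

Lemma marg_gt0 i : 0 < marg pdata q t i.
Proof.
have terms_ge0 x0 : 0 <= pdata x0 * q t x0 i.
  exact: mulr_ge0 (pdata_ge0 x0) (ltW (q_gt0 x0 i)).
rewrite lt_def sumr_ge0 // andbT; apply/eqP => /psumr_eq0P.
move/(_ (fun x0 _ => terms_ge0 x0)) => marg0.
have : \sum_x0 pdata x0 = 0.
  apply: big1 => x0 _; apply/eqP.
  by move/eqP: (marg0 x0 isT); rewrite mulf_eq0 (gt_eqF (q_gt0 x0 i)) orbF.
by rewrite pdata_sum1; apply/eqP; rewrite oner_eq0.
Qed.

Lemma cond_rev_rate_ge0 x0 i j : i != j -> 0 <= cond_rev_rate Rt q t x0 i j.
Proof.
move=> ij; apply: divr_ge0; last exact: ltW.
by apply: mulr_ge0; [apply: Rt_ge0; rewrite eq_sym | exact: ltW].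
Qed.

Lemma rev_rate_wmean i j :
  rev_rate Rt pdata q t i j =
  wmean (fun x0 => pdata x0 * q t x0 i) (fun x0 => cond_rev_rate Rt q t x0 i j).
Proof.
rewrite /wmean /rev_rate -/(marg pdata q t i); congr (_ / _).
rewrite /marg mulr_sumr; apply: eq_bigr => x0 _; rewrite /cond_rev_rate.
by field; rewrite gt_eqF.
Qed.

Lemma gap_integrand_ge0 : 0 <= gap_integrand.
Proof.
apply: sumr_ge0 => i _; apply: sumr_ge0 => j ij; rewrite rev_rate_wmean.
apply: sum_fdiv_wmean_ge0 => [x0|x0|]; last exact: marg_gt0.
- exact: mulr_ge0 (pdata_ge0 x0) (ltW (q_gt0 x0 _)).
- by rewrite cond_rev_rate_ge0 // eq_sym.
Qed.

Lemma LKL_integrand_split d (Rth : 'rV[R]_d -> R -> 'I_S -> 'I_S -> R) th :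
  (forall i j, i != j -> 0 < Rth th t i j) ->
  LKL_integrand Rt pdata q Rth th t = KL_integrand Rt pdata q Rth th t + gap_integrand.
Proof.
move=> Rth_gt0; rewrite /LKL_integrand /KL_integrand /gap_integrand -big_split /=.
under eq_bigr do under eq_bigr do rewrite mulr_sumr.
rewrite exchange_big /=; apply: eq_bigr => i _.
rewrite exchange_big mulr_sumr -big_split /=; apply: eq_bigr => j ij.
rewrite rev_rate_wmean; apply: sum_fdiv_wmean => [x0|x0||].
- exact: mulr_ge0 (pdata_ge0 x0) (ltW (q_gt0 x0 _)).
- by rewrite cond_rev_rate_ge0 // eq_sym.
- exact: marg_gt0.
- by rewrite Rth_gt0 // eq_sym.
Qed.

End ReverseRates.

Lemma Rintegral_eq_add (dT : measure_display) (T : measurableType dT) (R : realType)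
    (mu : {measure set T -> \bar R}) (D : set T) (f g e : T -> R) :
  measurable D -> mu.-integrable D (EFin \o f) -> mu.-integrable D (EFin \o g) ->
  {in D, forall x, f x = g x + e x} ->
  \int[mu]_(x in D) f x = \int[mu]_(x in D) g x + \int[mu]_(x in D) e x.
Proof.
move=> mD If Ig fge.
have -> : \int[mu]_(x in D) e x = \int[mu]_(x in D) (f x - g x).
  by apply: eq_Rintegral => x xD; rewrite fge // addrC addKr.
by rewrite RintegralB // addrC subrK.
Qed.

Section AddConstant.
Variables (R : realType) (V : normedModType R) (G : V -> R) (C : R).

Lemma differentiable_addr_cst x :
  differentiable (fun y => G y + C) x <-> differentiable G x.
Proof.
have -> : (fun y => G y + C) = G + cst C by [].
split=> [dGC|dG]; last exact: differentiableD.
have -> : G = (G + cst C) - cst C by apply/funext => y /=; rewrite addrK.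
exact: differentiableB.
Qed.

Lemma derivable_addr_cst x v :
  derivable (fun y => G y + C) x v <-> derivable G x v.
Proof.
have -> : (fun y => G y + C) = G + cst C by [].
split=> [dGC|dG]; last exact: derivableD.
have -> : G = (G + cst C) - cst C by apply/funext => y /=; rewrite addrK.
exact: derivableB.
Qed.

(* The difference quotients coincide, so this holds even where [G] is not derivable. *)
Lemma derive_addr_cst x v : 'D_v (fun y => G y + C) x = 'D_v G x.
Proof.
rewrite /derive /=.
suff -> : (fun h : R => h^-1 *: (G (h *: v + x) + C - (G x + C))) =
          (fun h : R => h^-1 *: (G (h *: v + x) - G x)) by [].
by apply/funext => h; rewrite opprD addrACA subrr addr0.
Qed.

End AddConstant.

Lemma stationary_addr_cst (R : realType) d (G : 'rV[R]_d -> R) (C : R) th :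
  stationary (fun y => G y + C) th <-> stationary G th.
Proof.
rewrite /stationary differentiable_addr_cst.
by split=> -[dG D0]; split=> // v; rewrite -(D0 v) derive_addr_cst.
Qed.

Theorem proposition4p8 (R : realType) (S d : nat) (T : R)
  (Rt : R -> 'I_S -> 'I_S -> R) (pdata : 'I_S -> R)
  (q : R -> 'I_S -> 'I_S -> R)
  (Rth : 'rV[R]_d -> R -> 'I_S -> 'I_S -> R) :
  0 < T ->
  (* forward CTMC with rate matrices R_t, X_0 ~ p_data *)
  (forall t, rate_matrix (Rt t)) ->
  (forall x0, 0 <= pdata x0) -> \sum_(x0 : 'I_S) pdata x0 = 1 ->
  (forall x0 i, q 0 x0 i = (i == x0)%:R) ->
  (forall x0 i, {within `[0, T], continuous (fun s => q s x0 i)}) ->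
  (forall x0 j t, 0 < t < T ->
     is_derive t 1 (fun s => q s x0 j) (\sum_(i : 'I_S) q t x0 i * Rt t i j)) ->
  (* ratios and logarithms well defined *)
  (forall t x0 i, 0 < t <= T -> 0 < q t x0 i) ->
  (* (ii) positivity and differentiability of the model rates *)
  (forall th t i j, i != j -> 0 < Rth th t i j) ->
  (forall t i j th, i != j -> differentiable (fun th' => Rth th' t i j) th) ->
  (* both objectives are well-defined (finite) integrals *)
  (forall th, lebesgue_measure.-integrable `[0, T]
       (EFin \o LKL_integrand Rt pdata q Rth th)) ->
  (forall th, lebesgue_measure.-integrable `[0, T]
       (EFin \o KL_integrand Rt pdata q Rth th)) ->
  exists Cgap : R, 0 <= Cgap /\
    (forall th, LKL T Rt pdata q Rth th = KLpath T Rt pdata q Rth th + Cgap) /\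
    (forall th, (differentiable (LKL T Rt pdata q Rth) th <->
                 differentiable (KLpath T Rt pdata q Rth) th) /\
       forall v, (derivable (LKL T Rt pdata q Rth) th v <->
                  derivable (KLpath T Rt pdata q Rth) th v) /\
                 'D_v (LKL T Rt pdata q Rth) th = 'D_v (KLpath T Rt pdata q Rth) th) /\
    (forall th, (forall th', LKL T Rt pdata q Rth th <= LKL T Rt pdata q Rth th') <->
                (forall th', KLpath T Rt pdata q Rth th <= KLpath T Rt pdata q Rth th')) /\
    (forall th, stationary (LKL T Rt pdata q Rth) th <->
                stationary (KLpath T Rt pdata q Rth) th).
Proof.
move=> _ Rt_rate pdata_ge0 pdata_sum1 _ _ _ q_gt0 Rth_gt0 _ LKL_int KL_int.
set D := `]0, T]%classic.
have q_gt0D x : D x -> forall x0 i, 0 < q x x0 i.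
  by rewrite /D /= in_itv /= => /andP[x_gt0 x_leT] x0 i; rewrite q_gt0 ?x_gt0.
have intD F : lebesgue_measure.-integrable `[0, T] (EFin \o F) ->
    lebesgue_measure.-integrable D (EFin \o F).
  apply: integrableS => //; first exact: measurable_itv.
  by move=> x; rewrite /D /= !in_itv /= => /andP[/ltW -> ->].
pose Cgap := \int[lebesgue_measure]_(x in D) gap_integrand Rt pdata q x.
have LKL_KL : LKL T Rt pdata q Rth = fun th => KLpath T Rt pdata q Rth th + Cgap.
  apply/funext => th; rewrite /LKL /KLpath /Cgap.
  have LKL_intD := intD _ (LKL_int th); have KL_intD := intD _ (KL_int th).
  rewrite -!Rintegral_itv_obnd_cbnd //.
  apply: Rintegral_eq_add => // x /set_mem Dx.
  by apply: LKL_integrand_split => //;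
    [exact: (Rt_rate x).1 | exact: q_gt0D | exact: Rth_gt0].
exists Cgap; split.
  by apply: Rintegral_ge0 => x Dx; apply: gap_integrand_ge0 => //;
    [exact: (Rt_rate x).1 | exact: q_gt0D].
rewrite LKL_KL; split=> //; split=> [th|].
  split=> [|v]; first exact: differentiable_addr_cst.
  by rewrite derivable_addr_cst derive_addr_cst.
split=> th; last exact: stationary_addr_cst.
by split=> min_th th'; have := min_th th'; rewrite lerD2r.
Qed.
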